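(* Let $m,r,\delta\ge 1$, $n=m(r+1)$, let $q$ be a prime power, $\alpha$ a primitive element of $\mathbb{F}_q$, and $\beta\in\mathbb{F}_q$ an element of multiplicative order $\psi$ with $\psi\ge r+1$ (so $\psi\mid q-1$), and assume $q-1\ge \psi m$. Let $H_0$ be the $\delta\times(r+1)$ matrix with $(a,b)$ entry $\beta^{ab}$ for $0\le a\le\delta-1$, $0\le b\le r$, and for $j=1,\dots,m$ let $H_j$ be the $2\times(r+1)$ matrix whose first row is $(1,\beta^{\delta},\beta^{2\delta},\dots,\beta^{r\delta})$ and whose second row is $(\alpha^{j-1},\alpha^{j-1}\beta^{-1},\alpha^{j-1}\beta^{-2},\dots,\alpha^{j-1}\beta^{-r})$. Let $\mathcal{C}$ be the code of length $n$ with parity-check matrix $$H=\begin{pmatrix} H_0&0&\cdots&0\\ 0&H_0&\cdots&0\\ \vdots&&\ddots&\vdots\\ 0&0&\cdots&H_0\\ H_1&H_2&\cdots&H_m\end{pmatrix}.$$ Then $\mathcal{C}$ is a maximally recoverable (partial MDS) code: it corrects every erasure pattern consisting of $\delta$ erasures in each of the $m$ local groups (the blocks of $r+1$ consecutive coordinates) together with $2$ additional erasures at arbitrary further positions. *)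

From HB Require Import structures.
From mathcomp Require Import all_boot all_order all_algebra.
Unset Implicit Arguments. Unset Printing Implicit Defensive.
Import GRing.Theory.
Local Open Scope ring_scope.

(* Coordinates of the code of length n = m(r+1) are 'I_(m*(r+1)); coordinate i
   lies in local group  i %/ (r+1)  (0-based, group j+1 in the paper) at
   position  i %% (r+1)  inside the group. *)

(* Parity-check matrix H, rows 'I_(m*delta + 2):
   rows k < m*delta : block-diagonal copies of H_0, row a = k %% delta of the
     copy in group g = k %/ delta, entry beta^(a*b);
   row m*delta      : first rows of H_1..H_m, entry beta^(delta*b);
   row m*delta+1    : second rows of H_j, entry alpha^(j-1) * beta^(-b). *)
Definition pmds_H (F : fieldType) (m r delta : nat) (alpha beta : F)
  : 'M[F]_(m * delta + 2, m * (r + 1)) :=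
  \matrix_(k, i)
    let g := ((i : nat) %/ (r + 1))%N in
    let b := ((i : nat) %% (r + 1))%N in
    if ((k : nat) < m * delta)%N then
      (if ((k : nat) %/ delta == g)%N then beta ^+ (((k : nat) %% delta) * b) else 0)
    else if ((k : nat) == m * delta)%N then beta ^+ (delta * b)
    else alpha ^+ g * beta ^- b.

Definition pmds_code (F : fieldType) (m r delta : nat) (alpha beta : F)
  (c : 'rV[F]_(m * (r + 1))) : Prop :=
  pmds_H F m r delta alpha beta *m c^T = 0.

(* A code C (a predicate on words) corrects the erasure pattern E iff no
   nonzero codeword is supported inside E (equivalently, every codeword is
   determined by its unerased coordinates). *)
Definition corrects_erasures (F : fieldType) (N : nat)
  (C : 'rV[F]_N -> Prop) (E : {set 'I_N}) : Prop :=
  forall c, C c -> (forall i, i \notin E -> c ord0 i = 0) -> c = 0.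

(* Erasure pattern: delta erasures in each of the m local groups plus 2
   further erasures, i.e. |E| = m*delta + 2 and every group contains at
   least delta erased positions. *)
Definition pmds_pattern (m r delta : nat) (E : {set 'I_(m * (r + 1))}) : Prop :=
  #|E| = (m * delta + 2)%N /\
  forall g : 'I_m, (delta <= #|[set i in E | ((i : nat) %/ (r + 1) == g)%N]|)%N.

From HB Require Import structures.
From mathcomp Require Import all_boot all_order all_algebra.
From mathcomp Require Import zify ring.
Import GRing.Theory.
Local Open Scope ring_scope.

(* Let c be a codeword supported on the erasure pattern, S_g its erased positions
   in group g and x_i = beta^(i mod (r+1)) the nodes, distinct inside a group.
   The rows of H_0 say that the power sums \sum_{S_g} c_i x_i^a vanish for
   a < delta, so by Vandermonde every group with at most delta erasures carries
   no weight.  Counting leaves either one group with delta+2 erasures or two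
   groups with delta+1.  In the first case the two global rows add the power
   sums of exponents delta and -1, completing a Vandermonde system of size
   delta+2.  In the second, the exponent-delta sum of each group is determined
   by its exponent-(-1) sum, and the global rows become a 2x2 system with
   nonzero determinant, which forces both groups to vanish. *)

Lemma prim_root_neq0 {R : nzRingType} {n : nat} {z : R} :
  n.-primitive_root z -> z != 0.
Proof.
move=> z_prim; apply/eqP => z0; have := prim_expr_order z_prim.
by rewrite z0 expr0n gtn_eqF ?(prim_order_gt0 z_prim) // => /eqP; rewrite eq_sym oner_eq0.
Qed.

Lemma sum_mul_horner {F : fieldType} {I : finType} (S : {set I}) (x v : I -> F)
  {p : {poly F}} {n : nat} : (size p <= n)%N ->
  \sum_(i in S) v i * p.[x i] = \sum_(k < n) p`_k * \sum_(i in S) v i * x i ^+ k.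
Proof.
move=> size_p.
under eq_bigr => i _ do rewrite (horner_coef_wide _ size_p) mulr_sumr.
rewrite exchange_big; apply: eq_bigr => k _; rewrite mulr_sumr.
by apply: eq_bigr => i _; rewrite mulrCA.
Qed.

Lemma vandermonde_weights_eq0 {F : fieldType} {I : finType} (S : {set I})
    (x v : I -> F) :
  {in S &, injective x} ->
  (forall k, (k < #|S|)%N -> \sum_(i in S) v i * x i ^+ k = 0) ->
  {in S, forall j, v j = 0}.
Proof.
move=> x_inj power_sums j jS.
pose Q := \prod_(z <- [seq x i | i in S :\ j]) ('X - z%:P).
have size_Q : (size Q <= #|S|)%N.
  by rewrite size_prod_XsubC size_image (cardsD1 j S) jS.
have := sum_mul_horner S x v size_Q.
rewrite [RHS]big1 => [|k _]; last by rewrite power_sums // mulr0.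
have Q_root i : i \in S :\ j -> root Q (x i) by move=> iSj; rewrite root_prod_XsubC image_f.
rewrite (bigD1 j) //= big1 ?addr0 => [|i /andP[iS ij]]; last first.
  by rewrite (rootP (Q_root i _)) ?mulr0 // !inE ij.
move/eqP; rewrite mulf_eq0 => /orP[/eqP // | /eqP/rootP].
rewrite root_prod_XsubC => /imageP[i]; rewrite !inE => /andP[ij iS] /x_inj.
by move=> /(_ jS iS) ji; rewrite ji eqxx in ij.
Qed.

(* Expanding [\sum_i (c_i / x_i) Q(x_i) = 0] for [Q = \prod_i ('X - x_i)] kills
   all power sums but those of exponents [-1] and [d], weighted by [Q(0)] and 1. *)
Lemma top_power_sum_eq {F : fieldType} {I : finType} (S : {set I}) (x c : I -> F)
    (d : nat) :
  {in S, forall i, x i != 0} -> #|S| = d.+1 ->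
  (forall k, (k < d)%N -> \sum_(i in S) c i * x i ^+ k = 0) ->
  \sum_(i in S) c i * x i ^+ d + (\prod_(i in S) - x i) * \sum_(i in S) c i / x i = 0.
Proof.
move=> x_neq0 card_S power_sums.
pose Q := \prod_(z <- [seq x i | i in S]) ('X - z%:P).
have size_Q : (size Q <= d.+2)%N by rewrite size_prod_XsubC size_image card_S.
have := sum_mul_horner S x (fun i => c i / x i) size_Q.
rewrite big1 => [|i iS]; last first.
  by rewrite (rootP _) ?mulr0 // root_prod_XsubC image_f.
have shift k : \sum_(i in S) c i / x i * x i ^+ k.+1 = \sum_(i in S) c i * x i ^+ k.
  by apply: eq_bigr => i iS; rewrite exprS mulrA mulfVK ?x_neq0.
rewrite big_ord_recl big_ord_recr /= [X in _ + (X + _)]big1 => [|k _]; last first.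
  by rewrite /bump /= add1n shift power_sums ?mulr0.
have Q0 : Q`_0 = \prod_(i in S) - x i.
  rewrite -horner_coef0 horner_prod big_image.
  by apply: eq_bigr => i _; rewrite hornerXsubC sub0r.
have Q_lead : Q`_d.+1 = 1.
  have /monicP := monic_prod_XsubC [seq x i | i in S] xpredT id.
  by rewrite lead_coefE size_prod_XsubC size_image card_S.
rewrite /bump /= add1n shift Q0 Q_lead mul1r add0r.
under [X in _ = _ * X + _ -> _]eq_bigr => i _ do rewrite expr0 mulr1.
by rewrite addrC => <-.
Qed.

Lemma sum_nat_eq0_in {I : finType} {P : pred I} (h : I -> nat) :
  (\sum_(i | P i) h i = 0)%N -> forall i, P i -> h i = 0%N.
Proof.
move/eqP; rewrite sum_nat_eq0 => /forallP h0 i Pi.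
by apply/eqP; move/implyP: (h0 i); apply.
Qed.

Lemma sum_nat_gt0_exists {I : finType} {P : pred I} (h : I -> nat) :
  (0 < \sum_(i | P i) h i)%N -> exists2 i, P i & (0 < h i)%N.
Proof.
rewrite lt0n sum_nat_eq0 negb_forall => /existsP[i].
by rewrite negb_imply -lt0n => /andP[Pi hi]; exists i.
Qed.

Lemma sum_nat_eq2 {I : finType} (h : I -> nat) : (\sum_i h i = 2)%N ->
  (exists i, h i = 2 /\ forall j, j != i -> h j = 0)%N \/
  (exists i k, [/\ i != k, h i = 1, h k = 1 & forall j, j != i -> j != k -> h j = 0])%N.
Proof.
move=> sum2; have [i _ hi_gt0] : exists2 i, true & (0 < h i)%N.
  by apply: sum_nat_gt0_exists; rewrite sum2.
move: sum2; rewrite (bigD1 i) //=.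
have [hi2 sum2 | hi1 sum1] := leqP 2 (h i).
  left; exists i; split; first lia.
  by apply: sum_nat_eq0_in; lia.
have [k ki hk_gt0] : exists2 k, k != i & (0 < h k)%N.
  by apply: sum_nat_gt0_exists; lia.
move: sum1; rewrite (bigD1 k) //= => sum1.
right; exists i, k; split; [by rewrite eq_sym | lia | lia |].
move=> j ji jk; apply: (@sum_nat_eq0_in _ (fun j => (j != i) && (j != k))); last first.
  by rewrite ji jk.
lia.
Qed.

Lemma sum_excess_two {m d : nat} {f : 'I_m -> nat} : (forall g, d <= f g)%N ->
  (\sum_g f g = m * d + 2)%N ->
  (exists g, f g = d.+2 /\ forall g', g' != g -> f g' <= d)%N \/
  (exists g1 g2, [/\ g1 != g2, f g1 = d.+1, f g2 = d.+1 &
     forall g, g != g1 -> g != g2 -> f g <= d])%N.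
Proof.
move=> f_ge sum_f; pose h g := (f g - d)%N.
have f_eq g : f g = (h g + d)%N by rewrite subnK.
have : (\sum_g h g = 2)%N.
  move: sum_f; under eq_bigr => g _ do rewrite f_eq.
  by rewrite big_split /= sum_nat_const card_ord; lia.
case/sum_nat_eq2 => [[g [hg rest]] | [g1 [g2 [ne hg1 hg2 rest]]]].
  by left; exists g; split=> [|g' /rest]; rewrite f_eq; lia.
right; exists g1, g2; split=> // [||g gg1 gg2]; rewrite f_eq ?(rest g) //; lia.
Qed.

Lemma syndrome_system_eq0 {F : fieldType} {s1 s2 t1 t2 q1 q2 a1 a2 : F} :
  s1 + q1 * t1 = 0 -> s2 + q2 * t2 = 0 -> s1 + s2 = 0 -> a1 * t1 + a2 * t2 = 0 ->
  q1 * a2 - q2 * a1 != 0 -> s1 = 0 /\ s2 = 0.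
Proof.
move=> e1 e2 e12 ea det_neq0.
have qt : q1 * t1 + q2 * t2 = 0.
  have -> : q1 * t1 + q2 * t2 = (s1 + q1 * t1) + (s2 + q2 * t2) - (s1 + s2) by ring.
  by rewrite e1 e2 e12 addr0 subr0.
have t1_0 : t1 = 0.
  apply: (mulIf det_neq0); rewrite mul0r.
  have -> : t1 * (q1 * a2 - q2 * a1) = a2 * (q1 * t1 + q2 * t2) - q2 * (a1 * t1 + a2 * t2)
    by ring.
  by rewrite qt ea !mulr0 subr0.
have s1_0 : s1 = 0 by move: e1; rewrite t1_0 mulr0 addr0.
by move: e12; rewrite s1_0 add0r.
Qed.

Lemma pmds_group_subproof {m r : nat} (i : 'I_(m * (r + 1))) : (i %/ (r + 1) < m)%N.
Proof. by rewrite ltn_divLR ?addn1 // -addn1 ltn_ord. Qed.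

Definition pmds_group {m r : nat} (i : 'I_(m * (r + 1))) : 'I_m :=
  Ordinal (pmds_group_subproof i).

Definition pmds_node {F : fieldType} {m r : nat} (beta : F) (i : 'I_(m * (r + 1))) : F :=
  beta ^+ (i %% (r + 1)).

Definition erased_in {m r : nat} (E : {set 'I_(m * (r + 1))}) (g : 'I_m) :=
  [set i in E | (i %/ (r + 1) == g)%N].

Lemma sum_card_erased_in {m r : nat} (E : {set 'I_(m * (r + 1))}) :
  (\sum_g #|erased_in E g| = #|E|)%N.
Proof.
rewrite -sum1_card (partition_big pmds_group xpredT) //=.
by apply: eq_bigr => g _; rewrite -sum1_card; apply: eq_bigl => i; rewrite inE.
Qed.

Lemma block_index_ltn {m d : nat} (g : 'I_m) {a : nat} :
  (a < d)%N -> (g * d + a < m * d)%N.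
Proof. by move=> a_lt; have := ltn_ord g; nia. Qed.

Section ErasedCodeword.

Context {F : fieldType} {m r delta psi n : nat} {alpha beta : F}.
Hypothesis alpha_prim : n.-primitive_root alpha.
Hypothesis beta_prim : psi.-primitive_root beta.
Hypothesis psi_ge : (r + 1 <= psi)%N.
Hypothesis psim_le : (psi * m <= n)%N.

Context {E : {set 'I_(m * (r + 1))}} {c : 'rV[F]_(m * (r + 1))}.
Hypothesis c_code : pmds_code F m r delta alpha beta c.
Hypothesis c_supp : forall i, i \notin E -> c ord0 i = 0.

Local Notation S := (erased_in E).
Local Notation node := (@pmds_node F m r beta).
Local Notation top_sum g := (\sum_(i in S g) c ord0 i * node i ^+ delta).
Local Notation inv_sum g := (\sum_(i in S g) c ord0 i / node i).

Lemma node_neq0 i : node i != 0.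
Proof. by rewrite expf_neq0 ?(prim_root_neq0 beta_prim). Qed.

Lemma node_inj g : {in S g &, injective node}.
Proof.
move=> i j; rewrite !inE => /andP[_ /eqP gi] /andP[_ /eqP gj].
have mod_lt k : (k %% (r + 1) < psi)%N by rewrite (leq_trans _ psi_ge) ?ltn_mod ?addn1.
move/eqP; rewrite (eq_prim_root_expr beta_prim) !(modn_small (mod_lt _)) => /eqP ij.
by apply: ord_inj; rewrite (divn_eq i (r + 1)) (divn_eq j (r + 1)) gi gj ij.
Qed.

Lemma pmds_code_row k : \sum_j pmds_H F m r delta alpha beta k j * c ord0 j = 0.
Proof.
move/matrixP: c_code => /(_ k ord0); rewrite [LHS]mxE [RHS]mxE => row0.
by rewrite -[RHS]row0; apply: eq_bigr => j _; rewrite !mxE.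
Qed.

Lemma sum_by_group (G : 'I_(m * (r + 1)) -> F) :
  \sum_j c ord0 j * G j = \sum_g \sum_(j in S g) c ord0 j * G j.
Proof.
rewrite (partition_big pmds_group xpredT) //=; apply: eq_bigr => g _.
rewrite big_mkcond [RHS]big_mkcond; apply: eq_bigr => j _.
rewrite inE -[pmds_group j == g](inj_eq val_inj) /=.
by case: (boolP (j \in E)) => // /c_supp ->; rewrite mul0r; case: ifP.
Qed.

Lemma local_power_sum g a : (a < delta)%N ->
  \sum_(i in S g) c ord0 i * node i ^+ a = 0.
Proof.
move=> a_lt; have k_lt_md := block_index_ltn g a_lt.
have k_lt : (g * delta + a < m * delta + 2)%N := ltn_addr _ k_lt_md.
have k_div : ((g * delta + a) %/ delta = g)%N.
  by rewrite divnMDl ?(leq_ltn_trans (leq0n a) a_lt) // divn_small ?addn0.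
have k_mod : ((g * delta + a) %% delta = a)%N by rewrite modnMDl modn_small.
rewrite -[RHS](pmds_code_row (Ordinal k_lt)) big_mkcond; apply: eq_bigr => j _.
rewrite mxE /= k_lt_md k_div k_mod [(g : nat) == _]eq_sym inE.
case: (boolP (j \in E)) => [_|/c_supp ->]; last by rewrite mulr0.
case: (j %/ (r + 1) == g)%N; last by rewrite mul0r.
by rewrite /= /pmds_node -exprM mulrC (mulnC a).
Qed.

Lemma sum_top_sums : \sum_(g < m) top_sum g = 0.
Proof.
have k_lt : (m * delta < m * delta + 2)%N by rewrite -addn1 leq_add2l.
rewrite -sum_by_group -[RHS](pmds_code_row (Ordinal k_lt)); apply: eq_bigr => j _.
by rewrite mxE /= ltnn eqxx /pmds_node -exprM mulrC (mulnC delta).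
Qed.

Lemma sum_inv_sums : \sum_(g < m) alpha ^+ g * inv_sum g = 0.
Proof.
have k_lt : (m * delta + 1 < m * delta + 2)%N by rewrite ltn_add2l.
under eq_bigr => g _.
  rewrite mulr_sumr; under eq_bigr => j /setIdP[_ /eqP <-] do rewrite mulrCA.
  over.
rewrite /= -sum_by_group -[RHS](pmds_code_row (Ordinal k_lt)); apply: eq_bigr => j _.
by rewrite mxE /= ltnNge leq_addr (addn1 (m * delta)) (gtn_eqF (ltnSn _)) mulrC.
Qed.

Lemma group_vanishes_card_le g : (#|S g| <= delta)%N -> {in S g, forall i, c ord0 i = 0}.
Proof.
move=> card_le; apply: vandermonde_weights_eq0 (node_inj g) _ => k k_lt.
by apply: local_power_sum; apply: leq_trans card_le.
Qed.

Lemma light_group_sums g : (#|S g| <= delta)%N -> top_sum g = 0 /\ inv_sum g = 0.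
Proof.
move/group_vanishes_card_le => c0.
by split; apply: big1 => i /c0 ->; rewrite mul0r.
Qed.

Lemma group_vanishes_card_delta1 g :
  #|S g| = delta.+1 -> top_sum g = 0 -> {in S g, forall i, c ord0 i = 0}.
Proof.
move=> card_S top0; apply: vandermonde_weights_eq0 (node_inj g) _ => k.
rewrite card_S ltnS leq_eqVlt => /orP[/eqP -> // | k_lt].
exact: local_power_sum.
Qed.

Lemma group_vanishes_card_delta2 g : #|S g| = delta.+2 ->
  top_sum g = 0 -> inv_sum g = 0 -> {in S g, forall i, c ord0 i = 0}.
Proof.
move=> card_S top0 inv0 i iS.
have cx0 : {in S g, forall j, c ord0 j / node j = 0}.
  apply: vandermonde_weights_eq0 (node_inj g) _; rewrite card_S => -[_ | k].
    by rewrite -[RHS]inv0; apply: eq_bigr => j _; rewrite expr0 mulr1.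
  under eq_bigr => j _ do rewrite exprS mulrA mulfVK ?node_neq0 //.
  rewrite !ltnS leq_eqVlt => /orP[/eqP -> // | k_lt].
  exact: local_power_sum.
by move/eqP: (cx0 i iS); rewrite mulf_eq0 invr_eq0 (negbTE (node_neq0 i)) orbF => /eqP.
Qed.

Lemma top_sum_card_delta1 g : #|S g| = delta.+1 ->
  top_sum g + (\prod_(i in S g) - node i) * inv_sum g = 0.
Proof.
by move=> card_S; apply: top_power_sum_eq card_S (local_power_sum g) => i _; apply: node_neq0.
Qed.

(* Raising to the power [psi] kills the [beta]-parts of the products and leaves
   [alpha ^+ (g2 * psi) = alpha ^+ (g1 * psi)], with both exponents below [n]. *)
Lemma heavy_pair_det_neq0 g1 g2 : g1 != g2 -> #|S g1| = delta.+1 -> #|S g2| = delta.+1 ->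
  (\prod_(i in S g1) - node i) * alpha ^+ g2 - (\prod_(i in S g2) - node i) * alpha ^+ g1 != 0.
Proof.
move=> g12 card1 card2.
have psi_gt0 : (0 < psi)%N := prim_order_gt0 beta_prim.
have node_psi i : node i ^+ psi = 1.
  by rewrite -exprM mulnC exprM (prim_expr_order beta_prim) expr1n.
have prod_psi g : #|S g| = delta.+1 ->
    (\prod_(i in S g) - node i) ^+ psi = ((-1) ^+ psi) ^+ delta.+1.
  move=> card_S; rewrite -prodrXl -card_S -prodr_const.
  by apply: eq_bigr => i _; rewrite -[- node i]mulN1r exprMn node_psi mulr1.
have sgn_neq0 : ((-1 : F) ^+ psi) ^+ delta.+1 != 0.
  by rewrite !expf_neq0 // oppr_eq0 oner_eq0.
have lt_n (g : 'I_m) : (g * psi < n)%N.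
  by rewrite (leq_trans _ psim_le) // mulnC ltn_pmul2l.
rewrite subr_eq0; apply: contra g12 => /eqP /(congr1 (fun z => z ^+ psi)) /=.
rewrite !exprMn prod_psi // prod_psi // => /(mulfI sgn_neq0)/eqP.
rewrite -!exprM (eq_prim_root_expr alpha_prim) !(modn_small (lt_n _)) eqn_pmul2r //.
by rewrite eq_sym.
Qed.

Lemma groups_vanish_eq0 : (forall g, {in S g, forall i, c ord0 i = 0}) -> c = 0.
Proof.
move=> c0; apply/rowP => i; rewrite mxE.
have [iE | /c_supp //] := boolP (i \in E).
by apply: (c0 (pmds_group i)); rewrite inE iE eqxx.
Qed.

Lemma one_heavy_group_eq0 g1 : #|S g1| = delta.+2 ->
  (forall g : 'I_m, g != g1 -> #|S g| <= delta)%N -> c = 0.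
Proof.
move=> card1 light.
have top1 : top_sum g1 = 0.
  rewrite -[RHS]sum_top_sums (bigD1 g1) //= [X in _ + X]big1 ?addr0 // => g /light.
  by case/light_group_sums.
have inv1 : inv_sum g1 = 0.
  have := sum_inv_sums; rewrite (bigD1 g1) //= [X in _ + X]big1 ?addr0 => [|g /light].
    by move/eqP; rewrite mulf_eq0 expf_eq0 (negbTE (prim_root_neq0 alpha_prim)) andbF => /eqP.
  by case/light_group_sums => _ ->; rewrite mulr0.
apply: groups_vanish_eq0 => g; have [-> | /light] := eqVneq g g1.
  exact: group_vanishes_card_delta2.
exact: group_vanishes_card_le.
Qed.

Lemma two_heavy_groups_eq0 g1 g2 : g1 != g2 -> #|S g1| = delta.+1 -> #|S g2| = delta.+1 ->
  (forall g : 'I_m, g != g1 -> g != g2 -> #|S g| <= delta)%N -> c = 0.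
Proof.
move=> g12 card1 card2 light.
have split_sum (f : 'I_m -> F) : (forall g, g != g1 -> g != g2 -> f g = 0) ->
    \sum_g f g = f g1 + f g2.
  move=> f0; rewrite (bigD1 g1) // (bigD1 g2) 1?eq_sym //= big1 ?addr0 //.
  by move=> g /andP[g_1 g_2]; apply: f0.
have top12 : top_sum g1 + top_sum g2 = 0.
  rewrite -[RHS]sum_top_sums split_sum // => g g_1 g_2.
  by case: (light_group_sums _ (light g g_1 g_2)).
have inv12 : alpha ^+ g1 * inv_sum g1 + alpha ^+ g2 * inv_sum g2 = 0.
  rewrite -[RHS]sum_inv_sums split_sum // => g g_1 g_2.
  by case: (light_group_sums _ (light g g_1 g_2)) => _ ->; rewrite mulr0.
have [top1 top2] := syndrome_system_eq0 (top_sum_card_delta1 _ card1)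
  (top_sum_card_delta1 _ card2) top12 inv12 (heavy_pair_det_neq0 _ _ g12 card1 card2).
apply: groups_vanish_eq0 => g.
have [-> | g_1] := eqVneq g g1; first exact: group_vanishes_card_delta1.
have [-> | g_2] := eqVneq g g2; first exact: group_vanishes_card_delta1.
exact: group_vanishes_card_le _ (light g g_1 g_2).
Qed.

End ErasedCodeword.

Theorem mainTheorem5 (F : finFieldType) (m r delta psi : nat) (alpha beta : F) :
  (1 <= m)%N -> (1 <= r)%N -> (1 <= delta)%N ->
  (#|F|.-1).-primitive_root alpha ->
  psi.-primitive_root beta ->
  (r + 1 <= psi)%N ->
  (psi * m <= #|F|.-1)%N ->
  forall E : {set 'I_(m * (r + 1))},
    pmds_pattern m r delta E ->
    @corrects_erasures F (m * (r + 1)) (pmds_code F m r delta alpha beta) E.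
Proof.
move=> _ _ _ alpha_prim beta_prim psi_ge psim_le E [card_E groups_E] c c_code c_supp.
have := sum_excess_two groups_E; rewrite sum_card_erased_in => /(_ card_E).
case=> [[g [card_g light]] | [g1 [g2 [g12 card1 card2 light]]]].
- by apply: (one_heavy_group_eq0 alpha_prim beta_prim psi_ge c_code c_supp g card_g).
- by apply: (two_heavy_groups_eq0 alpha_prim beta_prim psi_ge psim_le c_code c_supp
    g1 g2 g12 card1 card2).
Qed.
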